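(* Let $\varepsilon>0$ and let $N=O\!\left(\frac{|\Omega|^{|\Omega|^2}}{\varepsilon^{|\Omega|^2+|\Omega|}}\right)$. Given access to a best response oracle, one can compute, for each type $\theta\in\Theta$, a set of actions $A_\theta\subseteq A$ using $N$ queries to the oracle per type, such that there exists an IC and IR menu $\mathcal{M}=\{(E(\theta),t(\theta))\}_{\theta\in\Theta}$ in which every experiment uses at most $N$ signals, every type $\theta$, upon receiving any signal of its experiment $E(\theta)$, has an optimal action (one maximizing its posterior expected utility) in $A_\theta$, and $\mathrm{Rev}(\mathcal{M})\ge\mathrm{OPT}-O(\sqrt{\varepsilon})$. (The constants hidden in $O(\cdot)$ are absolute.)
   Context: Single-buyer information-selling model. $\Omega$ is a finite set of states, $A$ a finite (possibly exponentially large) set of actions, and $u_{\omega,a}\in[0,1]$ the buyer's ex-post utility. A type is $\theta\in\Delta(\Omega)$; $\Theta\subseteq\Delta(\Omega)$ is a finite type space with distribution $F$. An experiment $E$ with finite signal set $S$ is a matrix $\pi(E)=(\pi_{\omega,s}(E))_{\omega\in\Omega,s\in S}$ with nonnegative entries and $\sum_s\pi_{\omega,s}(E)=1$ for every $\omega$. The value of $E$ to type $\theta$ is $V_\theta(E)=\sum_{s\in S}\max_{a\in A}\sum_\omega\theta_\omega\pi_{\omega,s}(E)u_{\omega,a}$, and the base utility is $u(\theta)=\max_{a}\sum_\omega\theta_\omega u_{\omega,a}$. A menu assigns to each type $\theta$ an experiment $E(\theta)$ and a price $t(\theta)$; it is IC if $V_\theta(E(\theta))-t(\theta)\ge V_\theta(E(\theta'))-t(\theta')$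 for all $\theta,\theta'$, and IR if $V_\theta(E(\theta))-t(\theta)\ge u(\theta)$ for all $\theta$. Its revenue is $\mathrm{Rev}=\sum_\theta F(\theta)t(\theta)$; $\mathrm{OPT}$ is the maximum revenue over IC and IR menus. A best response (BR) oracle takes a distribution $q\in\Delta(\Omega)$ and returns an action $a\in\arg\max_{a\in A}\sum_\omega q_\omega u_{\omega,a}$. *)

From HB Require Import structures.
From mathcomp Require Import all_boot all_order all_algebra.
From mathcomp Require Import reals.
Set Implicit Arguments. Unset Strict Implicit. Unset Printing Implicit Defensive.
Import Order.TTheory GRing.Theory Num.Theory.
Local Open Scope ring_scope.

Section InfoSelling.
Variable R : realType.

Definition is_distr (T : finType) (q : T -> R) : Prop :=
  (forall x, 0 <= q x) /\ \sum_(x : T) q x = 1.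

Definition is_experiment (Omega S : finType) (pi : Omega -> S -> R) : Prop :=
  (forall w s, 0 <= pi w s) /\ (forall w, \sum_(s : S) pi w s = 1).

(* Maximum over a finite set of nonnegative reals (all quantities maximized
   below are nonnegative under the standing assumptions u in [0,1],
   theta >= 0, pi >= 0, so the neutral element 0 is harmless). *)
Definition fmax (T : finType) (f : T -> R) : R := \big[Num.max/0]_(x : T) f x.

Definition value (Omega A S : finType) (u : Omega -> A -> R)
    (theta : Omega -> R) (pi : Omega -> S -> R) : R :=
  \sum_(s : S) fmax (fun a : A => \sum_(w : Omega) theta w * pi w s * u w a).

Definition base_util (Omega A : finType) (u : Omega -> A -> R)
    (theta : Omega -> R) : R :=
  fmax (fun a : A => \sum_(w : Omega) theta w * u w a).

Definition sig_prob (Omega S : finType) (theta : Omega -> R)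
    (pi : Omega -> S -> R) (s : S) : R :=
  \sum_(w : Omega) theta w * pi w s.

(* posterior belief after signal s (meaningful when sig_prob > 0) *)
Definition posterior (Omega S : finType) (theta : Omega -> R)
    (pi : Omega -> S -> R) (s : S) (w : Omega) : R :=
  theta w * pi w s / sig_prob theta pi s.

(* A menu, indexed by the type space I (types theta i, i : I), with
   experiment E i over signal set S i and price t i. *)
Definition menu_IC (Omega A I : finType) (u : Omega -> A -> R)
    (theta : I -> Omega -> R) (S : I -> finType)
    (E : forall i, Omega -> S i -> R) (t : I -> R) : Prop :=
  forall i j, value u (theta i) (E j) - t j <= value u (theta i) (E i) - t i.

Definition menu_IR (Omega A I : finType) (u : Omega -> A -> R)
    (theta : I -> Omega -> R) (S : I -> finType)
    (E : forall i, Omega -> S i -> R) (t : I -> R) : Prop :=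
  forall i, base_util u (theta i) <= value u (theta i) (E i) - t i.

Definition revenue (I : finType) (F : I -> R) (t : I -> R) : R :=
  \sum_(i : I) F i * t i.

Definition is_BR_oracle (Omega A : finType) (u : Omega -> A -> R)
    (br : (Omega -> R) -> A) : Prop :=
  forall q : Omega -> R, is_distr q ->
    forall a : A, \sum_(w : Omega) q w * u w a <= \sum_(w : Omega) q w * u w (br q).

End InfoSelling.

(* An (adaptive) oracle query strategy: given the list of oracle answers
   received so far (actions, only comparable for equality), the next query.
   [run_queries q br n] is the list of the n answers obtained. *)
Fixpoint run_queries (X : Type) (T : eqType) (q : seq T -> X) (br : X -> T)
    (n : nat) : seq T :=
  match n with
  | 0 => [::]
  | n'.+1 => let h := run_queries q br n' in rcons h (br (q h))
  end.

From HB Require Import structures.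
From mathcomp Require Import all_boot all_order all_algebra.
From mathcomp Require Import reals classical_sets.
From mathcomp Require Import ring lra.
Import Order.TTheory GRing.Theory Num.Theory.
Local Open Scope ring_scope.
Set Implicit Arguments. Unset Strict Implicit.

(* Fix a resolution m and the grid of points g/m, g : Omega -> {0,..,m}.  A
   grid experiment has one signal per grid point g, sent in state w with
   probability c(g) g(w)/m for nonnegative weights c.  The value of a signal is x |-> max_a sum_w theta_w x_w u_wa
      applied to its likelihood column x; this map is sublinear and monotone.
      Splitting every column of an experiment into a grid multiple of its
      maximum plus a residual of size at most 1/m of that maximum (sent along
      the unit vectors) gives a grid experiment worth at least as much, and at
      most |Omega|/m more, to every type.
   2. Recommendation.  The posterior after grid signal g is theta * g
      normalized, whatever the weights; querying the oracle on these posteriors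
      gives each type an optimal action for every signal of every grid
      experiment.
   3. Menu.  Take a menu within eta = sqrt eps of the supremum revenue, offer
      its rounded experiments at prices discounted by the factor (1 - eta)
      together with the free uninformative option, and let each type choose.
      The discount makes every type still pay at least its old price - 2 eta.
   4. Counting.  With m = floor(|Omega|/eps) + 1 the grid has (m+1)^|Omega|
      points, which is at most 3 |Omega|^(|Omega|^2) / eps^(|Omega|^2+|Omega|). *)

Section FiniteMax.
Variable R : realType.

Lemma fmax_ge0 (T : finType) (f : T -> R) : 0 <= fmax f.
Proof. by rewrite /fmax; elim/big_rec: _ => //= i x _ hx; rewrite le_max hx orbT. Qed.

Lemma fmax_ub (T : finType) (f : T -> R) x : f x <= fmax f.
Proof. by rewrite /fmax (bigD1 x) //= le_max lexx. Qed.

Lemma fmax_lub (T : finType) (f : T -> R) b :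
  0 <= b -> (forall x, f x <= b) -> fmax f <= b.
Proof.
by move=> b0 hb; rewrite /fmax; elim/big_rec: _ => //= i x _ hx; rewrite ge_max hx hb.
Qed.

Lemma fmax_mono (T : finType) (f g : T -> R) :
  (forall x, f x <= g x) -> fmax f <= fmax g.
Proof.
by move=> h; apply: fmax_lub => [|x]; [exact: fmax_ge0 | exact: le_trans (h x) (fmax_ub _ _)].
Qed.

Lemma fmax_scale (T : finType) (f : T -> R) c :
  0 <= c -> fmax (fun x => c * f x) = c * fmax f.
Proof.
move=> c0; apply/eqP; rewrite eq_le; apply/andP; split.
  by apply: fmax_lub => [|x]; rewrite ?mulr_ge0 ?fmax_ge0 // ler_wpM2l // fmax_ub.
have [->|cn0] := eqVneq c 0; first by rewrite mul0r fmax_ge0.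
have cp : 0 < c by rewrite lt_def cn0.
rewrite -ler_pdivlMl //; apply: fmax_lub => [|x].
  by rewrite mulr_ge0 ?invr_ge0 ?fmax_ge0 // ltW.
by rewrite ler_pdivlMl //; exact: (fmax_ub (fun x => c * f x)).
Qed.

Lemma fmax_add (T : finType) (f g : T -> R) :
  fmax (fun x => f x + g x) <= fmax f + fmax g.
Proof. by apply: fmax_lub => [|x]; rewrite ?addr_ge0 ?fmax_ge0 ?lerD ?fmax_ub. Qed.

Lemma fmax_sum (T J : finType) (f : J -> T -> R) :
  fmax (fun x => \sum_(j : J) f j x) <= \sum_(j : J) fmax (f j).
Proof.
apply: fmax_lub => [|x]; first by apply: sumr_ge0 => j _; exact: fmax_ge0.
by apply: ler_sum => j _; exact: fmax_ub.
Qed.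
End FiniteMax.

Section SignalValue.
Variable R : realType.
Variables (Omega A : finType) (u : Omega -> A -> R) (th : Omega -> R).
Hypothesis u01 : forall w a, 0 <= u w a <= 1.
Hypothesis th0 : forall w, 0 <= th w.

(* The value to type [th] of a signal with (unnormalized) likelihood column
   [x]; the value of an experiment is the sum of the values of its columns. *)
Definition colval (x : Omega -> R) : R :=
  fmax (fun a : A => \sum_w th w * x w * u w a).

Lemma colval_ext x y : (forall w, x w = y w) -> colval x = colval y.
Proof. by move=> h; apply: eq_bigr => a _; apply: eq_bigr => w _; rewrite h. Qed.

Lemma colval_scale c x : 0 <= c -> colval (fun w => c * x w) = c * colval x.
Proof.
move=> c0; rewrite /colval -fmax_scale //; apply: eq_bigr => a _.
by rewrite mulr_sumr; apply: eq_bigr => w _; rewrite !mulrA (mulrC (th w)).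
Qed.

Lemma colval_add x y : colval (fun w => x w + y w) <= colval x + colval y.
Proof.
apply: le_trans (fmax_add _ _); apply: fmax_mono => a.
by rewrite -big_split /=; apply: ler_sum => w _; rewrite mulrDr mulrDl.
Qed.

Lemma colval_sum (J : finType) (x : J -> Omega -> R) :
  colval (fun w => \sum_j x j w) <= \sum_j colval (x j).
Proof.
apply: le_trans (fmax_sum (fun j a => \sum_w th w * x j w * u w a)).
apply: fmax_mono => a; rewrite exchange_big /=; apply: ler_sum => w _.
by rewrite mulr_sumr mulr_suml.
Qed.

Lemma colval_mono x y : (forall w, 0 <= x w <= y w) -> colval x <= colval y.
Proof.
move=> h; apply: fmax_mono => a; apply: ler_sum => w _.
have /andP[x0 xy] := h w; have /andP[u0 _] := u01 w a.
by rewrite ler_wpM2r // ler_wpM2l.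
Qed.

(* Utilities are at most 1, so a column is worth at most its total mass. *)
Lemma colval_le_mass x : (forall w, 0 <= x w) -> colval x <= \sum_w th w * x w.
Proof.
move=> h; apply: fmax_lub => [|a]; first by apply: sumr_ge0 => w _; rewrite mulr_ge0.
apply: ler_sum => w _; have /andP[_ u1] := u01 w a.
by rewrite ler_piMr // mulr_ge0.
Qed.
End SignalValue.

Section GridExperiments.
Variable R : realType.
Variables (Omega : finType) (m : nat).
Hypothesis m_gt0 : (0 < m)%N.

Definition grid := {ffun Omega -> 'I_m.+1}.
Definition gpt (g : grid) (w : Omega) : R := (g w)%:R / m%:R.
Definition grid_size := #|grid|.

Definition grid_exp (c : grid -> R) : Omega -> 'I_grid_size -> R :=
  fun w s => c (enum_val s) * gpt (enum_val s) w.

Lemma gpt_ge0 g w : 0 <= gpt g w.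
Proof. by rewrite /gpt divr_ge0. Qed.

Lemma sum_grid_signals (h : grid -> R) :
  \sum_(s : 'I_grid_size) h (enum_val s) = \sum_g h g.
Proof. by rewrite (big_enum_val h). Qed.

Definition unit_pt (w' : Omega) : grid :=
  [ffun w => if w == w' then ord_max else ord0].
Definition ones_pt : grid := [ffun => ord_max].

Lemma gpt_unit w' w : gpt (unit_pt w') w = (w == w')%:R.
Proof.
rewrite /gpt ffunE; case: eqP => _ /=; last by rewrite mul0r.
by rewrite divff // pnatr_eq0 -lt0n.
Qed.

Lemma gpt_ones w : gpt ones_pt w = 1.
Proof. by rewrite /gpt ffunE divff // pnatr_eq0 -lt0n. Qed.

Lemma sum_unit_pts (y : Omega -> R) w : \sum_w' y w' * gpt (unit_pt w') w = y w.
Proof.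
rewrite (bigD1 w) //= big1 => [|w' /negbTE hw]; last by rewrite gpt_unit eq_sym hw mulr0.
by rewrite gpt_unit eqxx mulr1 addr0.
Qed.

Lemma grid_exp_experiment (c : grid -> R) : (forall g, 0 <= c g) ->
  (forall w, \sum_g c g * gpt g w = 1) -> is_experiment (grid_exp c).
Proof.
move=> c0 h; split => [w s|w]; first by rewrite /grid_exp mulr_ge0 // gpt_ge0.
by rewrite -(h w) -sum_grid_signals.
Qed.

Variables (A : finType) (u : Omega -> A -> R).

Lemma value_grid_exp (c : grid -> R) th : (forall g, 0 <= c g) ->
  value u th (grid_exp c) = \sum_g c g * colval u th (gpt g).
Proof.
by move=> c0; rewrite -sum_grid_signals; apply: eq_bigr => s _; rewrite -colval_scale.
Qed.

(* The uninformative experiment puts all weight on the all-ones point. *)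
Definition no_info (g : grid) : R := (g == ones_pt)%:R.

Lemma sum_no_info (h : grid -> R) : \sum_g no_info g * h g = h ones_pt.
Proof.
rewrite (bigD1 ones_pt) //= /no_info eqxx mul1r big1 ?addr0 // => g /negbTE ->.
by rewrite mul0r.
Qed.

Lemma no_info_value th : \sum_g no_info g * colval u th (gpt g) = base_util u th.
Proof.
rewrite sum_no_info; apply: eq_bigr => a _; apply: eq_bigr => w _.
by rewrite gpt_ones mulr1.
Qed.

Definition grid_posterior (th : Omega -> R) (g : grid) : Omega -> R :=
  fun w => th w * gpt g w / \sum_w' th w' * gpt g w'.

Lemma posterior_grid_exp (c : grid -> R) th (s : 'I_grid_size) :
  (forall g, 0 <= c g) -> (forall w, 0 <= th w) ->
  0 < sig_prob th (grid_exp c) s ->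
  is_distr (grid_posterior th (enum_val s)) /\
  posterior th (grid_exp c) s =1 grid_posterior th (enum_val s).
Proof.
move=> c0 th0; set g := enum_val s; set D := \sum_w th w * gpt g w.
have sE : sig_prob th (grid_exp c) s = c g * D.
  by rewrite /sig_prob /D mulr_sumr; apply: eq_bigr => w _; rewrite /grid_exp -/g mulrCA.
have D0 : 0 <= D by apply: sumr_ge0 => w _; rewrite mulr_ge0 ?gpt_ge0.
rewrite sE => hp.
have Dn0 : D != 0 by apply: contraTneq hp => ->; rewrite mulr0 ltxx.
have cn0 : c g != 0 by apply: contraTneq hp => ->; rewrite mul0r ltxx.
split; last first.
  by move=> w; rewrite /posterior /grid_posterior sE /grid_exp -/g -/D; field; rewrite cn0 Dn0.
split => [w|]; first by rewrite divr_ge0 // mulr_ge0 ?gpt_ge0.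
by rewrite /grid_posterior -mulr_suml -/D divff.
Qed.
End GridExperiments.
Arguments gpt {R Omega m}.
Arguments grid_exp {R Omega m}.
Arguments ones_pt {Omega m}.
Arguments unit_pt {Omega m}.
Arguments no_info {R Omega m}.

Lemma regroup_sum (R : nzSemiRingType) (G K : finType)
    (pt : K -> G) (coef : K -> R) (H : G -> R) :
  \sum_g (\sum_k (pt k == g)%:R * coef k) * H g = \sum_k coef k * H (pt k).
Proof.
under eq_bigr do rewrite mulr_suml.
rewrite exchange_big /=; apply: eq_bigr => k _.
rewrite (bigD1 (pt k)) //= eqxx mul1r big1 ?addr0 // => g /negbTE.
by rewrite eq_sym => ->; rewrite !mul0r.
Qed.

Section Rounding.
Variable R : realType.
Variables (Omega S : finType) (m : nat) (pi : Omega -> S -> R).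
Hypothesis m_gt0 : (0 < m)%N.
Hypothesis pi0 : forall w s, 0 <= pi w s.

(* Column s of [pi] is [colmax s] times its rounding-down [round_pt s] to the
   grid, plus a residual vector that is at most [colmax s / m] entrywise. *)
Definition colmax s : R := fmax (fun w => pi w s).
Definition round_pt s : grid Omega m :=
  [ffun w => inord (Num.truncn (m%:R * (pi w s / colmax s)))].
Definition residual s w : R := pi w s - colmax s * gpt (round_pt s) w.

Lemma colmax_ge0 s : 0 <= colmax s. Proof. exact: fmax_ge0. Qed.

Lemma rounding_bounds s w :
  0 <= colmax s * gpt (round_pt s) w <= pi w s /\ 0 <= residual s w <= colmax s / m%:R.
Proof.
have mp : 0 < m%:R :> R by rewrite ltr0n.
have hM := colmax_ge0 s; have hp := pi0 w s.
have hpM : pi w s <= colmax s := fmax_ub (fun w => pi w s) w.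
have [M0|Mn0] := eqVneq (colmax s) 0.
  have p0 : pi w s = 0 by apply/eqP; rewrite eq_le hp andbT -M0.
  by rewrite /residual M0 p0 !mul0r subr0 lexx.
have Mp : 0 < colmax s by rewrite lt_def Mn0.
set x := pi w s / colmax s.
have x0 : 0 <= x by rewrite divr_ge0.
have x1 : x <= 1 by rewrite ler_pdivrMr // mul1r.
have /andP[t1 t2] := truncn_itv (mulr_ge0 (ltW mp) x0).
set t := Num.truncn _ in t1 t2.
have tm : (t <= m)%N.
  by rewrite -(ler_nat R); apply: le_trans t1 _; rewrite ler_piMr // ltW.
have gE : gpt (round_pt s) w = t%:R / m%:R by rewrite /gpt ffunE inordK // ltnS.
have pE : pi w s = colmax s * x by rewrite /x mulrC divfK.
have h1 : t%:R / m%:R <= x by rewrite ler_pdivrMr // mulrC.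
have h2 : x <= t%:R / m%:R + 1 / m%:R.
  by rewrite -mulrDl ler_pdivlMr // mulrC natr1 ltW.
have h0 : 0 <= t%:R / m%:R :> R by rewrite divr_ge0.
rewrite /residual gE pE; split; first by rewrite mulr_ge0 //= ler_wpM2l.
rewrite -mulrBr mulr_ge0 ?subr_ge0 //= -[X in _ <= X]mulr1 -mulrA ler_wpM2l //.
by rewrite mulr1; move: h2; rewrite div1r; lra.
Qed.

Lemma residual_ge0 s w : 0 <= residual s w.
Proof. by case: (rounding_bounds s w) => _ /andP[]. Qed.

(* The grid weights of the rounded experiment: each column contributes
   [colmax s] at [round_pt s] and its residual entries at the unit points. *)
Definition round_weights (g : grid Omega m) : R :=
  \sum_s (round_pt s == g)%:R * colmax s
  + \sum_(p : S * Omega) (unit_pt p.2 == g)%:R * residual p.1 p.2.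

Lemma sum_round_weights (H : grid Omega m -> R) :
  \sum_g round_weights g * H g
  = \sum_s (colmax s * H (round_pt s) + \sum_w residual s w * H (unit_pt w)).
Proof.
rewrite big_split /= pair_big /=; under eq_bigr do rewrite mulrDl.
by rewrite big_split /= !regroup_sum.
Qed.

Lemma round_weights_ge0 g : 0 <= round_weights g.
Proof.
by rewrite addr_ge0 //; apply: sumr_ge0 => ? _; rewrite mulr_ge0 ?colmax_ge0 ?residual_ge0.
Qed.

Lemma round_weights_row w : \sum_g round_weights g * gpt g w = \sum_s pi w s.
Proof.
rewrite sum_round_weights; apply: eq_bigr => s _.
by rewrite sum_unit_pts // /residual addrC subrK.
Qed.

Lemma sum_colmax : is_experiment pi -> \sum_s colmax s <= #|Omega|%:R.
Proof.
case=> _ p1; apply: (@le_trans _ _ (\sum_s \sum_w pi w s)).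
  apply: ler_sum => s _; apply: fmax_lub => [|w]; first exact: sumr_ge0.
  by rewrite (bigD1 w) //= lerDl sumr_ge0.
by rewrite exchange_big /=; under eq_bigr do rewrite p1; rewrite sumr_const.
Qed.

Variables (A : finType) (u : Omega -> A -> R) (th : Omega -> R).

(* By sublinearity, rounding never lowers the value of the experiment ... *)
Lemma round_value_ge :
  value u th pi <= \sum_g round_weights g * colval u th (gpt g).
Proof.
rewrite sum_round_weights; apply: ler_sum => s _.
rewrite -colval_scale ?colmax_ge0 //.
under eq_bigr do rewrite -colval_scale ?residual_ge0 //.
apply: le_trans (lerD (lexx _) (colval_sum u th _)).
apply: le_trans (colval_add u th _ _); rewrite le_eqVlt; apply/orP; left.
by apply/eqP; apply: colval_ext => w; rewrite sum_unit_pts // /residual addrC subrK.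
Qed.

Hypothesis u01 : forall w a, 0 <= u w a <= 1.
Hypothesis thD : is_distr th.

(* ... and raises it by at most |Omega|/m, the total residual mass. *)
Lemma round_value_le : is_experiment pi ->
  \sum_g round_weights g * colval u th (gpt g) <= value u th pi + #|Omega|%:R / m%:R.
Proof.
move=> piE; case: thD => t0 t1.
have residual_value s w :
    residual s w * colval u th (gpt (unit_pt w : grid Omega m)) <= th w * (colmax s / m%:R).
  rewrite -colval_scale ?residual_ge0 //.
  apply: le_trans (colval_le_mass u01 t0 _) _ => [w'|].
    by rewrite mulr_ge0 ?residual_ge0 ?gpt_ge0.
  rewrite (bigD1 w) //= big1 => [|w' /negbTE hw]; last by rewrite gpt_unit // hw !mulr0.
  rewrite gpt_unit // eqxx mulr1 addr0 ler_wpM2l //.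
  by case: (rounding_bounds s w) => _ /andP[].
rewrite sum_round_weights big_split /=; apply: lerD.
  apply: ler_sum => s _; rewrite -colval_scale ?colmax_ge0 //.
  by apply: colval_mono => // w; case: (rounding_bounds s w).
apply: (@le_trans _ _ (\sum_s \sum_w th w * (colmax s / m%:R))).
  by apply: ler_sum => s _; apply: ler_sum => w _; exact: residual_value.
under eq_bigr do rewrite -mulr_suml t1 mul1r.
by rewrite -mulr_suml ler_wpM2r ?invr_ge0 ?ler0n // sum_colmax.
Qed.
End Rounding.
Arguments round_weights {R Omega S} m pi g.

Lemma run_queries_size (X : Type) (T : eqType) (q : seq T -> X) br n :
  size (run_queries q br n) = n.
Proof. by elim: n => //= n IH; rewrite size_rcons IH. Qed.

Lemma run_queries_mem (X : Type) (T : eqType) (q : seq T -> X) br (f : nat -> X) n k :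
  (forall h, q h = f (size h)) -> (k < n)%N -> br (f k) \in run_queries q br n.
Proof.
move=> hq; elim: n => // n IH; rewrite ltnS leq_eqVlt => /orP[/eqP->|lt] /=.
  by rewrite mem_rcons inE hq run_queries_size eqxx.
by rewrite mem_rcons inE IH // orbT.
Qed.

Section Recommendation.
Variable R : realType.
Variables (Omega A : finType) (u : Omega -> A -> R) (m : nat).

Definition grid_queries (th : Omega -> R) (T : eqType) (h : seq T) : Omega -> R :=
  grid_posterior th (nth ones_pt (enum (grid Omega m)) (size h)).

Lemma grid_recommendation (c : grid Omega m -> R) th br (s : 'I_(grid_size Omega m)) :
  (forall g, 0 <= c g) -> is_distr th -> is_BR_oracle u br ->
  0 < sig_prob th (grid_exp c) s ->
  exists2 a : A, a \in run_queries (grid_queries th (T := A)) br (grid_size Omega m) &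
    forall a', \sum_w posterior th (grid_exp c) s w * u w a'
               <= \sum_w posterior th (grid_exp c) s w * u w a.
Proof.
move=> c0 [th0 _] brO hp; have [qD postE] := posterior_grid_exp c0 th0 hp.
exists (br (grid_posterior th (enum_val s))); last first.
  move=> a'; under eq_bigr do rewrite postE.
  by under [X in _ <= X]eq_bigr do rewrite postE; exact: brO.
have gin : enum_val s \in enum (grid Omega m) by rewrite mem_enum.
rewrite -(nth_index ones_pt gin).
apply: (@run_queries_mem _ _ _ br
  (fun k => grid_posterior th (nth ones_pt (enum (grid Omega m)) k))) => //.
by rewrite /grid_size cardE index_mem.
Qed.
End Recommendation.

Lemma tower_bound n : (0 < n)%N -> ((3 * n) ^ n <= 3 * n ^ (n ^ 2))%N.
Proof.
case: n => // n _; case: n => // n; case: n => // n.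
set k := n.+3.
have h1 : (3 * k <= k * k)%N by rewrite leq_mul2r.
apply: (@leq_trans ((k * k) ^ k)); first by rewrite leq_exp2r.
rewrite expnMn -expnD; apply: (@leq_trans (k ^ (k ^ 2))); last by rewrite leq_pmull.
by rewrite leq_pexp2l // addnn -mul2n expnS expn1 leq_mul2r; apply/orP; right.
Qed.

Definition resolution (R : realType) (n : nat) (eps : R) : nat :=
  (Num.truncn (n%:R / eps)).+1.

Lemma resolution_fine (R : realType) (n : nat) (eps : R) :
  0 < eps -> n%:R / (resolution n eps)%:R <= eps.
Proof.
move=> e0; have h := truncnS_gt (n%:R / eps).
have mp : 0 < (resolution n eps)%:R :> R by rewrite ltr0n.
by rewrite ler_pdivrMr // mulrC -ler_pdivrMr // ltW.
Qed.

(* (m+1)^n <= (3n/eps)^n <= 3 n^(n^2) / eps^(n^2+n) for eps <= 1. *)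
Lemma grid_count_bound (R : realType) (n : nat) (eps : R) : 0 < eps -> eps <= 1 ->
  (((resolution n eps).+1) ^ n)%:R <= 3%:R * (n ^ (n ^ 2))%:R / eps ^+ (n ^ 2 + n) :> R.
Proof.
move=> e0 e1; case: n => [|k]; first by rewrite expn0 !expr0 divr1 mulr1 ler_nat.
set n := k.+1.
have x1 : 1 <= n%:R / eps.
  by rewrite ler_pdivlMr // mul1r; apply: le_trans e1 _; rewrite ler1n.
have hm : (resolution n eps)%:R <= n%:R / eps + 1.
  by rewrite /resolution -natr1 lerD2r truncn_le divr_ge0 ?ler0n ?ltW.
have hm1 : ((resolution n eps).+1)%:R <= 3%:R * n%:R / eps.
  by rewrite -natr1 -mulrA; apply: le_trans (lerD hm (lexx 1)) _; lra.
rewrite natrX; apply: (@le_trans _ _ ((3%:R * n%:R / eps) ^+ n)).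
  by rewrite lerXn2r ?nnegrE ?ler0n // divr_ge0 ?mulr_ge0 ?ler0n ?ltW.
have H1 : ((3 * n) ^ n)%:R <= (3 * n ^ (n ^ 2))%:R :> R by rewrite ler_nat tower_bound.
have H2 : (eps ^+ n)^-1 <= (eps ^+ (n ^ 2 + n))^-1.
  by rewrite lef_pV2 ?posrE ?exprn_gt0 //; exact: (ler_wiXn2l (ltW e0) e1 (leq_addl _ _)).
rewrite expr_div_n -natrM -natrX.
apply: le_trans (ler_wpM2r _ H1) _; first by rewrite invr_ge0 ltW // exprn_gt0.
by rewrite natrM -!mulrA ler_wpM2l ?ler0n // ler_wpM2l ?ler0n.
Qed.

(* Choosing among discounted rounded options, a type only leaves its own
   option for one that costs almost as much: if option o'
   (reference value v', rounded value w' <= v' + d, price p' <= 1) beats the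
   own option (reference value v <= rounded value w, price p) after both
   prices are scaled by 1 - eta, and the reference menu was IC (v' - p' <=
   v - p), then the new payment (1 - eta) p' is at least p - 2 eta. *)
Lemma discounted_price (R : realFieldType) (eta d v w p v' w' p' : R) :
  0 < eta -> d <= eta ^+ 2 -> p' <= 1 -> w' <= v' + d -> v <= w ->
  v' - p' <= v - p -> w - (1 - eta) * p <= w' - (1 - eta) * p' ->
  p - 2 * eta <= (1 - eta) * p'.
Proof.
move=> eta0 hd p'1 hw' hw IC choice.
have gain : eta * p <= eta * (p' + eta) by rewrite mulrDr -expr2; lra.
rewrite ler_pM2l // in gain.
have : eta * p' <= eta by rewrite -[X in _ <= X]mulr1 ler_wpM2l // ltW.
lra.
Qed.

Lemma best_choice (R : realDomainType) (I O : finType) (o0 : O) (U : I -> O -> R) :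
  exists ch : I -> O, forall i o, U i o <= U i (ch i).
Proof.
apply: (@fin_all_exists I (fun _ => O) (fun i oi => forall o, U i o <= U i oi)) => i.
by case: (@arg_maxP _ _ O o0 xpredT (U i) isT) => o _ h; exists o => o'; exact: h.
Qed.

Lemma revenue_shift (R : realType) (I : finType) (F t t' : I -> R) d :
  is_distr F -> (forall i, t' i - d <= t i) -> revenue F t' - d <= revenue F t.
Proof.
case=> F0 F1 h; have -> : revenue F t' - d = \sum_i F i * (t' i - d).
  by rewrite /revenue; under [RHS]eq_bigr do rewrite mulrBr; rewrite sumrB -mulr_suml F1 mul1r.
by apply: ler_sum => i _; rewrite ler_wpM2l.
Qed.

Section Menus.
Variable R : realType.
Variables (Omega A I : finType) (u : Omega -> A -> R) (theta : I -> Omega -> R).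
Hypothesis u01 : forall w a, 0 <= u w a <= 1.
Hypothesis thD : forall i, is_distr (theta i).

Lemma value_le1 (S : finType) (pi : Omega -> S -> R) th :
  is_experiment pi -> is_distr th -> value u th pi <= 1.
Proof.
case=> p0 p1 [t0 t1]; apply: (@le_trans _ _ (\sum_s \sum_w th w * pi w s)).
  by apply: ler_sum => s _; exact: (colval_le_mass u01 t0 (fun w => p0 w s)).
by rewrite exchange_big /=; under eq_bigr do rewrite -mulr_sumr p1 mulr1; rewrite t1.
Qed.

(* Under IR no type pays more than 1, the largest possible value. *)
Lemma IR_price_le1 (S : I -> finType) (E : forall i, Omega -> S i -> R) t :
  (forall i, is_experiment (E i)) -> menu_IR u theta E t -> forall i, t i <= 1.
Proof.
move=> hE hIR i; have := hIR i; have := value_le1 (hE i) (thD i).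
have : 0 <= base_util u (theta i) := fmax_ge0 _; lra.
Qed.

Definition feasible_revenue (F : I -> R) : set R :=
  fun r => exists (S : I -> finType) (E : forall i, Omega -> S i -> R) (t : I -> R),
    [/\ forall i, is_experiment (E i), menu_IC u theta E t, menu_IR u theta E t
      & r = revenue F t].

(* These revenues are bounded by 1, so some menu is eta-close to their
   supremum, i.e. eta-optimal. *)
Lemma near_optimal_menu (F : I -> R) eta : is_distr F -> 0 < eta ->
  exists (S : I -> finType) (E : forall i, Omega -> S i -> R) (t : I -> R),
    [/\ forall i, is_experiment (E i), menu_IC u theta E t, menu_IR u theta E t
      & forall (S' : I -> finType) (E' : forall i, Omega -> S' i -> R) (t' : I -> R),
          (forall i, is_experiment (E' i)) -> menu_IC u theta E' t' ->
          menu_IR u theta E' t' -> revenue F t' - eta <= revenue F t].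
Proof.
move=> [F0 F1] eta0.
have rev_le1 r : feasible_revenue F r -> r <= 1.
  move=> [S [E [t [hE _ hIR ->]]]]; rewrite -F1; apply: ler_sum => i _.
  by rewrite -[X in _ <= X]mulr1 ler_wpM2l // (IR_price_le1 hE hIR).
have free_menu : feasible_revenue F 0.
  exists (fun _ => 'I_1), (fun _ _ _ => 1), (fun _ => 0); split => //.
  - by move=> i; split => // w; rewrite big_ord1.
  - move=> i; rewrite subr0 /value big_ord1 le_eqVlt; apply/orP; left.
    by apply/eqP; apply: eq_bigr => a _; apply: eq_bigr => w _; rewrite mulr1.
  - by rewrite /revenue big1 // => i _; rewrite mulr0.
have hsup : has_sup (feasible_revenue F) by split; [exists 0 | exists 1].
have [_ [S [E [t [hE hIC hIR ->]]]] close] := sup_adherent eta0 hsup.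
exists S, E, t; split => // S' E' t' hE' hIC' hIR'.
have : revenue F t' <= sup (feasible_revenue F).
  by apply: sup_upper_bound => //; exists S', E', t'.
lra.
Qed.

Variable m : nat.
Hypothesis m_gt0 : (0 < m)%N.

(* Rounding an IC and IR menu: offer the rounded experiment of every menu
   entry at its price times (1 - eta), plus free no information, and give each
   type its favourite option. *)
Lemma rounded_menu (S : I -> finType) (E : forall i, Omega -> S i -> R) (t : I -> R) eta :
  0 < eta -> #|Omega|%:R / m%:R <= eta ^+ 2 ->
  (forall i, is_experiment (E i)) -> menu_IC u theta E t -> menu_IR u theta E t ->
  exists (c : I -> grid Omega m -> R) (t' : I -> R),
    [/\ forall i g, 0 <= c i g, forall i, is_experiment (grid_exp (c i)),
        menu_IC u theta (fun i => grid_exp (c i)) t',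
        menu_IR u theta (fun i => grid_exp (c i)) t'
      & forall i, t i - 2 * eta <= t' i].
Proof.
move=> eta0 fine hE hIC hIR.
pose weights o : grid Omega m -> R := if o is Some j then round_weights m (E j) else no_info.
pose ref_value i o := if o is Some j then value u (theta i) (E j) else base_util u (theta i).
pose ref_price o := if o is Some j then t j else 0.
pose rounded_value i o := \sum_g weights o g * colval u (theta i) (gpt g).
pose util i o := rounded_value i o - (1 - eta) * ref_price o.
have weights_ge0 o g : 0 <= weights o g.
  by case: o => [j|]; [apply: round_weights_ge0; case: (hE j) | rewrite /no_info ler0n].
have valE i o : value u (theta i) (grid_exp (weights o)) = rounded_value i o.
  exact: value_grid_exp.
have option_facts i o : [/\ rounded_value i o <= ref_value i o + #|Omega|%:R / m%:R,
    ref_value i o - ref_price o <= value u (theta i) (E i) - t i & ref_price o <= 1].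
  case: o => [j|]; last by rewrite /rounded_value /= no_info_value // subr0 lerDl divr_ge0.
  rewrite /rounded_value /ref_value /=.
  have rounded_le := round_value_le m_gt0 (proj1 (hE j)) u01 (thD i) (hE j).
  split; [exact: rounded_le | exact: hIC | exact: IR_price_le1 hE hIR j].
have [ch hch] := best_choice None util.
exists (fun i => weights (ch i)), (fun i => (1 - eta) * ref_price (ch i)); split => //.
- move=> i; apply: grid_exp_experiment => // w; case: (ch i) => [j|] /=.
    by rewrite round_weights_row //; case: (hE j).
  by rewrite sum_no_info gpt_ones.
- by move=> i j; rewrite !valE; exact: hch.
- move=> i; rewrite valE; apply: le_trans (hch i None).
  by rewrite /util /rounded_value /= mulr0 subr0 no_info_value.
move=> i; have [hw' hIC' hp'] := option_facts i (ch i).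
apply: (discounted_price eta0 fine hp' hw' _ hIC' (hch i (Some i))).
have rounded_ge := round_value_ge m_gt0 (proj1 (hE i)) u (theta i).
by rewrite /rounded_value /=; exact: rounded_ge.
Qed.
End Menus.

Unset Implicit Arguments. Set Strict Implicit.

(* With eta = sqrt eps and resolution m = floor(|Omega|/eps) + 1, round an
   eta-optimal menu onto the grid; each type queries the oracle once per grid
   point.  Revenue drops by at most eta (near-optimality) + 2 eta (rounding). *)
Theorem mainTheorem5 :
  exists C1 C2 : nat,
  forall (R : realType) (Omega : finType) (eps : R),
  0 < eps -> eps <= 1 ->
  forall (I : finType) (theta : I -> Omega -> R) (F : I -> R),
  injective theta ->
  (forall i, is_distr (theta i)) ->
  is_distr F ->
  exists (N : nat) (alg : I -> forall T : eqType, seq T -> (Omega -> R)),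
    (N%:R <= C1%:R * (#|Omega| ^ (#|Omega| ^ 2))%:R
                   / eps ^+ (#|Omega| ^ 2 + #|Omega|)) /\
    forall (A : finType) (u : Omega -> A -> R),
    (forall w a, 0 <= u w a <= 1) ->
    forall br : (Omega -> R) -> A, is_BR_oracle u br ->
    let Aset := fun i : I => run_queries (alg i A) br N in
    exists (E : I -> Omega -> 'I_N -> R) (t : I -> R),
      (forall i, is_experiment (E i)) /\
      menu_IC (S := fun _ => 'I_N) u theta E t /\
      menu_IR (S := fun _ => 'I_N) u theta E t /\
      (forall i (s : 'I_N), 0 < sig_prob (theta i) (E i) s ->
         exists2 a : A, a \in Aset i &
           forall a' : A,
             \sum_(w : Omega) posterior (theta i) (E i) s w * u w a'
               <= \sum_(w : Omega) posterior (theta i) (E i) s w * u w a) /\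
      (forall (S : I -> finType) (E' : forall i, Omega -> S i -> R) (t' : I -> R),
         (forall i, is_experiment (E' i)) ->
         menu_IC (S := S) u theta E' t' -> menu_IR (S := S) u theta E' t' ->
         revenue F t' - C2%:R * Num.sqrt eps <= revenue F t).
Proof.
exists 3%N, 3%N => R Omega eps eps0 eps1 I theta F _ thD FD.
set m := resolution #|Omega| eps; set eta := Num.sqrt eps.
have m_gt0 : (0 < m)%N by [].
have eta0 : 0 < eta by rewrite sqrtr_gt0.
have fine : #|Omega|%:R / m%:R <= eta ^+ 2 by rewrite sqr_sqrtr ?resolution_fine // ltW.
exists (grid_size Omega m), (fun i => grid_queries m (theta i)); split.
  by rewrite /grid_size card_ffun card_ord; exact: grid_count_bound.
move=> A u u01 br brO Aset.
have [S [E [t [hE hIC hIR optimal]]]] := near_optimal_menu u01 thD FD eta0.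
have [c [t' [c0 hE' hIC' hIR' price]]] := rounded_menu u01 thD m_gt0 eta0 fine hE hIC hIR.
exists (fun i => grid_exp (c i)), t'; do 4![split => //].
  by move=> i s; exact: grid_recommendation (c0 i) (thD i) brO.
move=> S'' E'' t'' hE'' hIC'' hIR''.
have := optimal _ _ _ hE'' hIC'' hIR''; have := revenue_shift FD price.
rewrite -/eta; lra.
Qed.
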